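(* Let $M$ be an $\mathbf{FB}$-module and $\phi$ a symmetric operation on $M$. Then $\phi$ satisfies condition (B3) if and only if it satisfies (B3$'$): $\phi[n]=(-1)^{n+1}\phi[1]$ for all $n\ge1$.
   Context: $k$ is a commutative ring; $\mathbf{FB}$-modules are functors from finite sets and bijections to $k$-modules. A symmetric operation $\phi$ on $M$ assigns to each finite set $S$ and subsets $A,B\subseteq S$ a linear map $\phi^S_{A,B}:M(S\setminus B)\to M(S\setminus A)$, natural with respect to bijections. For $n\in\mathbb N$, $\phi[n]$ is the family defined for disjoint $A,B\subseteq S$ by $\phi[n]^S_{A,B}=\phi^{S\sqcup[n]}_{A\sqcup[n],B\sqcup[n]}$, where $[n]=\{1,\dots,n\}$ is taken disjoint from $S$. Condition (B3): for every finite set $S$ and subsets $A,B,C,D\subseteq S$ with $A\cap B=\emptyset$, $C\cap D=\emptyset$, $A\cap C\ne\emptyset$ and $B\cap D\ne\emptyset$, $\sum_{X\subseteq B\cap D}\phi^{S\setminus X}_{(D\setminus X)\cup C,\,A\cup(B\setminus X)}=\sum_{X\subseteq A\cap C}\phi^{S\setminus X}_{(C\setminus X)\cup D,\,B\cup(A\setminus X)}$. *)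

From HB Require Import structures.
From mathcomp Require Import all_boot all_order all_algebra.
Set Implicit Arguments. Unset Strict Implicit. Unset Printing Implicit Defensive.
Import GRing.Theory.
Local Open Scope ring_scope.

(* A finite set is modelled as a pair (S, E) with S : finType and E : {set S}.
   A bijection between finite sets E ⊆ S and F ⊆ T is represented by a
   partial map f : S -> option T whose restriction to E is a bijection onto F. *)
Definition pbij (S T : finType) (E : {set S}) (F : {set T})
  (f : S -> option T) : Prop :=
  [/\ forall x, x \in E -> exists2 y, f x = Some y & y \in F,
      {in E &, forall x x', f x = f x' -> x = x'} &
      forall y, y \in F -> exists2 x, x \in E & f x = Some y].

Definition pimage (S T : finType) (f : S -> option T) (A : {set S}) : {set T} :=
  [set y | [exists x in A, f x == Some y]].

Record FBmodule (k : comPzRingType) := {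
  Mobj : forall S : finType, {set S} -> lmodType k;
  Mact : forall (S T : finType) (E : {set S}) (F : {set T}),
           (S -> option T) -> {linear Mobj E -> Mobj F};
  Mact_ext : forall (S T : finType) (E : {set S}) (F : {set T})
               (f g : S -> option T),
      pbij E F f -> {in E, f =1 g} ->
      Mact E F f =1 Mact E F g;
  Mact_id : forall (S : finType) (E : {set S}) (v : Mobj E),
      Mact E E (@Some S) v = v;
  Mact_comp : forall (S T U : finType) (E : {set S}) (F : {set T}) (G : {set U})
      (f : S -> option T) (g : T -> option U),
      pbij E F f -> pbij F G g ->
      forall v : Mobj E,
      Mact E G (fun x => obind g (f x)) v = Mact F G g (Mact E F f v)
}.

Arguments Mobj {k} _ {S} E.
Arguments Mact {k} _ {S T} E F _.

(* canonical identification between M(E) and M(F) when E = F as sets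
   (identity map of the ambient type) *)
Definition relab (k : comPzRingType) (M : FBmodule k) (S : finType)
  (E F : {set S}) : Mobj M E -> Mobj M F := Mact M E F (@Some S).
Arguments relab {k} M {S} E F.

(* Symmetric operations: phi^E_{A,B} : M(E \ B) -> M(E \ A), natural in
   bijections (only the values at A, B ⊆ E are meaningful). *)
Record symop (k : comPzRingType) (M : FBmodule k) := {
  phi : forall (S : finType) (E A B : {set S}),
          {linear Mobj M (E :\: B) -> Mobj M (E :\: A)};
  phi_nat : forall (S T : finType) (E A B : {set S}) (F : {set T})
      (f : S -> option T),
      A \subset E -> B \subset E -> pbij E F f ->
      forall v : Mobj M (E :\: B),
      phi F (pimage f A) (pimage f B) (Mact M (E :\: B) (F :\: pimage f B) f v)
      = Mact M (E :\: A) (F :\: pimage f A) f (phi E A B v)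
}.

Arguments phi {k M} _ {S} E A B.

(* A ⊔ [n] inside the ambient type S + 'I_n *)
Definition lift_set (S : finType) (n : nat) (A : {set S}) : {set S + 'I_n} :=
  [set x | match x with inl s => s \in A | inr _ => true end].

Definition inl_part (S : finType) (n : nat) (x : S + 'I_n) : option S :=
  match x with inl s => Some s | inr _ => None end.

(* phi[n]^E_{A,B} = phi^{E ⊔ [n]}_{A ⊔ [n], B ⊔ [n]}, transported along the
   identifications (E⊔[n]) \ (B⊔[n]) = E \ B and (E⊔[n]) \ (A⊔[n]) = E \ A. *)
Definition phi_shift (k : comPzRingType) (M : FBmodule k) (p : symop M)
  (n : nat) (S : finType) (E A B : {set S}) (v : Mobj M (E :\: B))
  : Mobj M (E :\: A) :=
  Mact M (lift_set n E :\: lift_set n A) (E :\: A) (@inl_part S n)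
    (phi p (lift_set n E) (lift_set n A) (lift_set n B)
       (Mact M (E :\: B) (lift_set n E :\: lift_set n B)
          (fun s => Some (@inl S 'I_n s)) v)).

Arguments phi_shift {k M} p n {S} E A B v.

Definition condB3 (k : comPzRingType) (M : FBmodule k) (p : symop M) : Prop :=
  forall (S : finType) (E A B C D : {set S}),
    A \subset E -> B \subset E -> C \subset E -> D \subset E ->
    A :&: B = set0 -> C :&: D = set0 ->
    A :&: C != set0 -> B :&: D != set0 ->
    forall v : Mobj M (E :\: (A :|: B)),
    \sum_(X : {set S} | X \subset B :&: D)
       relab M (E :\: X :\: ((D :\: X) :|: C)) (E :\: (C :|: D))
         (phi p (E :\: X) ((D :\: X) :|: C) (A :|: (B :\: X))
            (relab M (E :\: (A :|: B)) (E :\: X :\: (A :|: (B :\: X))) v))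
    =
    \sum_(X : {set S} | X \subset A :&: C)
       relab M (E :\: X :\: ((C :\: X) :|: D)) (E :\: (C :|: D))
         (phi p (E :\: X) ((C :\: X) :|: D) (B :|: (A :\: X))
            (relab M (E :\: (A :|: B)) (E :\: X :\: (B :|: (A :\: X))) v)).

Definition condB3' (k : comPzRingType) (M : FBmodule k) (p : symop M) : Prop :=
  forall (n : nat), (1 <= n)%N ->
  forall (S : finType) (E A B : {set S}),
    A \subset E -> B \subset E -> A :&: B = set0 ->
    forall v : Mobj M (E :\: B),
    phi_shift p n E A B v = (-1) ^+ n.+1 *: phi_shift p 1 E A B v.

From mathcomp Require Import all_boot all_order all_algebra.
Set Implicit Arguments. Unset Strict Implicit. Unset Printing Implicit Defensive.
Import GRing.Theory.
Local Open Scope ring_scope.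

(* Let J = (A ∪ B) ∩ (C ∪ D). The two index sets of the X-th summand of (B3)
   meet exactly in J \ X, so by naturality that summand is phi[|J| - |X|]
   evaluated on E \ J, (C ∪ D) \ (A ∪ B) and (A ∪ B) \ (C ∪ D). Hence the
   two sides of (B3) are the sums Σ_i C(q, i) phi[|J| - i] for q = |B ∩ D| and
   q = |A ∩ C|. Under (B3') each such sum is a multiple of
   Σ_i (-1)^i C(q, i) = 0, since 0 < q < |J|. Conversely, adjoining n + 2
   points to E so that |J| = n + 2, |B ∩ D| = 1 and |A ∩ C| = 2 turns (B3)
   into phi[n+1] + phi[n] = 0, and (B3') follows by induction on n. *)

Ltac mem_cases H x :=
  move: (H x); rewrite ?inE /=; rewrite ?inE;
  repeat match goal with |- context [x \in ?Z] => case: (x \in Z) end; done.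

Lemma implyb_subset (T : finType) (A B : {set T}) x :
  A \subset B -> (x \in A) ==> (x \in B).
Proof. by move=> /subsetP sAB; apply/implyP/sAB. Qed.

Lemma nandb_setI0 (T : finType) (A B : {set T}) x :
  A :&: B = set0 -> ~~ ((x \in A) && (x \in B)).
Proof. by move=> AB0; rewrite -in_setI AB0 inE. Qed.

Lemma ltn_card_setI0 (T : finType) (P Q J : {set T}) :
  P \subset J -> Q \subset J -> P :&: Q = set0 -> Q != set0 -> (#|P| < #|J|)%N.
Proof.
move=> sPJ /subsetP sQJ PQ0 /set0Pn [x xQ]; apply/proper_card/properP; split=> //.
by exists x; [apply: sQJ | move: (nandb_setI0 x PQ0); rewrite xQ andbT].
Qed.

Lemma sum_subsets (V : nmodType) (T : finType) (Q : {set T}) (F : nat -> V) :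
  \sum_(X : {set T} | X \subset Q) F #|X| = \sum_(i < #|Q|.+1) F i *+ 'C(#|Q|, i).
Proof.
rewrite (partition_big (fun X : {set T} => (inord #|X| : 'I_#|Q|.+1)) predT) //=.
apply: eq_bigr => i _.
rewrite (eq_bigr (fun _ => F i)); last first.
  by move=> X /andP [sXQ /eqP <-]; rewrite inordK // ltnS subset_leq_card.
rewrite big_const iter_addr_0 -cards_draws; congr (_ *+ _).
apply: eq_card => X; rewrite unfold_in /= inE.
have [sXQ|] //= := boolP (X \subset Q).
have ltXQ : (#|X| < #|Q|.+1)%N by rewrite ltnS subset_leq_card.
by apply/eqP/eqP => [<-|->]; [rewrite inordK | apply: inord_val].
Qed.

Lemma sum_sign_binomial (R : pzRingType) q :
  (0 < q)%N -> \sum_(i < q.+1) (-1) ^+ i *+ 'C(q, i) = 0 :> R.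
Proof. by move=> q_gt0; rewrite -exprD1n addNr expr0n eqn0Ngt q_gt0. Qed.

Lemma pbij_comp (S T U : finType) (E : {set S}) (F : {set T}) (G : {set U}) f g :
  pbij E F f -> pbij F G g -> pbij E G (fun x => obind g (f x)).
Proof.
case=> f1 f2 f3 [g1 g2 g3]; split.
- by move=> x xE; have [y -> yF] := f1 x xE; apply: g1.
- move=> x x' xE x'E; have [y fy yF] := f1 x xE; have [y' fy' y'F] := f1 x' x'E.
  by rewrite fy fy' /= => gy; apply: f2; rewrite // fy fy' (g2 y y').
- move=> z zG; have [y yF gy] := g3 z zG; have [x xE fx] := f3 y yF.
  by exists x; rewrite // fx.
Qed.

Lemma pbij_setD (S T : finType) (E X : {set S}) (F : {set T}) f :
  pbij E F f -> X \subset E -> pbij (E :\: X) (F :\: pimage f X) f.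
Proof.
case=> f1 f2 f3 /subsetP sXE; split.
- move=> x /setDP [xE xX]; have [y fy yF] := f1 x xE; exists y => //.
  rewrite !inE yF andbT; apply/existsP => -[x' /andP [x'X /eqP fx']].
  have x'x : x' = x by apply: f2 => //; [apply: sXE | rewrite fx' fy].
  by move: xX; rewrite -x'x x'X.
- by move=> x x' /setDP [xE _] /setDP [x'E _]; apply: f2.
- move=> y /setDP [yF yX]; have [x xE fx] := f3 y yF; exists x => //.
  rewrite !inE xE andbT; apply: contra yX => xX.
  by rewrite inE; apply/existsP; exists x; rewrite xX fx eqxx.
Qed.

Lemma pbij_id (S : finType) (E : {set S}) : pbij E E (@Some S).
Proof. by split=> [x xE | x x' _ _ [] | y yE]; [exists x | | exists y]. Qed.

Lemma pimage_id (S : finType) (A : {set S}) : pimage (@Some S) A = A.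
Proof.
apply/setP => y; rewrite inE; apply/existsP/idP => [[x /andP [xA /eqP [<-]]] //|yA].
by exists y; rewrite yA eqxx.
Qed.

Definition inl_set (S : finType) (N : nat) (Z : {set S}) : {set S + 'I_N} :=
  [set x | if x is inl s then s \in Z else false].

Definition inr_set (S : finType) (N : nat) (Z : {set 'I_N}) : {set S + 'I_N} :=
  [set x | if x is inr i then i \in Z else false].

Lemma lift_setS (S : finType) N (A E : {set S}) :
  A \subset E -> lift_set N A \subset lift_set N E.
Proof. by move=> /subsetP sAE; apply/subsetP => -[s|i]; rewrite !inE //; apply: sAE. Qed.

Lemma lift_setD (S : finType) N (E B : {set S}) :
  lift_set N E :\: lift_set N B = inl_set N (E :\: B).
Proof. by apply/setP => -[s|i]; rewrite !inE //= andbC. Qed.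

Lemma pbij_inl_set (S : finType) N (Z : {set S}) :
  pbij Z (inl_set N Z) (fun s => Some (@inl S 'I_N s)).
Proof.
split=> [x xZ | x x' _ _ [[]] // | [s|i]]; rewrite ?inE //.
- by exists (inl x); rewrite ?inE.
- by move=> sZ; exists s.
Qed.

Lemma pbij_inl_part (S : finType) N (Z : {set S}) :
  pbij (inl_set N Z) Z (@inl_part S N).
Proof.
split=> [[s|i] | [s|i] [s'|i'] | y yZ]; rewrite ?inE //=.
- by move=> sZ; exists s.
- by move=> _ _ [->].
- by exists (inl y); rewrite ?inE.
Qed.

Lemma pimage_inl (S : finType) N (Z : {set S}) :
  pimage (fun s => Some (@inl S 'I_N s)) Z = inl_set N Z.
Proof.
apply/setP => -[s|i]; rewrite !inE /=.
- apply/existsP/idP => [[x /andP [xZ /eqP [<-]]] // | sZ].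
  by exists s; rewrite sZ eqxx.
- by apply/existsP => -[x /andP [_ /eqP]].
Qed.

Lemma card_inr_set (S : finType) N (Z : {set 'I_N}) : #|inr_set S Z| = #|Z|.
Proof.
have -> : inr_set S Z = inr @: Z.
  apply/setP => -[s|i]; rewrite inE /=; last by rewrite (mem_imset _ _ (@inr_inj _ _)).
  by apply/esym/imsetP => -[j _].
by rewrite card_imset //; apply: inr_inj.
Qed.

Definition extend_enum (S0 S : finType) (g : S0 -> option S) (I : {set S})
  (z : S0 + 'I_#|I|) : option S :=
  match z with inl s => g s | inr i => Some (enum_val i) end.
Arguments extend_enum {S0 S} g I z.

Lemma pbij_extend_enum (S0 S : finType) (E0 : {set S0}) (F I : {set S}) g :
  pbij E0 F g -> F :&: I = set0 ->
  pbij (lift_set #|I| E0) (F :|: I) (extend_enum g I).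
Proof.
case=> g1 g2 g3 FI0; have FIF y : y \in F -> y \in I -> False.
  by move=> yF yI; move: (nandb_setI0 y FI0); rewrite yF yI.
split.
- case=> [s|i]; rewrite inE /=; last by exists (enum_val i); rewrite // inE enum_valP orbT.
  by move=> sE; have [y gy yF] := g1 s sE; exists y; rewrite // inE yF.
- case=> [s|i] [s'|i']; rewrite !inE /=.
  + by move=> sE s'E gss'; congr inl; apply: g2.
  + move=> sE _ gs; have [y gy yF] := g1 s sE.
    by case: (FIF y yF); move: gs; rewrite gy => -[->]; apply: enum_valP.
  + move=> _ s'E gs'; have [y gy yF] := g1 s' s'E.
    by case: (FIF y yF); move: gs'; rewrite gy => -[<-]; apply: enum_valP.
  + by move=> _ _ [/enum_val_inj ->].
- move=> y; rewrite inE; have [yI _|_] := boolP (y \in I); last rewrite orbF => yF.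
    by exists (inr (enum_rank_in yI y)); rewrite ?inE //= enum_rankK_in.
  by have [x xE gx] := g3 y yF; exists (inl x); rewrite ?inE.
Qed.

Lemma pimage_extend_enum (S0 S : finType) (Z : {set S0}) (I : {set S}) g :
  pimage (extend_enum g I) (lift_set #|I| Z) = pimage g Z :|: I.
Proof.
apply/setP => y; rewrite !inE; apply/existsP/orP.
- case=> -[s|i]; rewrite inE /=.
  + by move=> /andP [sZ gs]; left; apply/existsP; exists s; rewrite sZ.
  + by move=> /eqP [<-]; right; apply: enum_valP.
- case=> [/existsP [s /andP [sZ gs]] | yI]; first by exists (inl s); rewrite inE sZ.
  by exists (inr (enum_rank_in yI y)); rewrite inE /= enum_rankK_in.
Qed.

Section FBmoduleTransport.
Variables (k : comPzRingType) (M : FBmodule k).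

Lemma relab_Mact (S T : finType) (E : {set S}) (F F' : {set T}) f (v : Mobj M E) :
  F = F' -> relab M F F' (Mact M E F f v) = Mact M E F' f v.
Proof. by move=> eFF'; case: F' / eFF'; rewrite /relab Mact_id. Qed.

Lemma relabK (S : finType) (E F : {set S}) (v : Mobj M E) :
  E = F -> relab M F E (relab M E F v) = v.
Proof. by move=> eEF; rewrite {2}/relab relab_Mact // Mact_id. Qed.

Lemma MactK (S T : finType) (E : {set S}) (F : {set T}) f f' :
  pbij E F f -> pbij F E f' -> {in E, forall x, obind f' (f x) = Some x} ->
  cancel (Mact M E F f) (Mact M F E f').
Proof.
move=> hf hf' ff' v; rewrite -Mact_comp //.
by rewrite (Mact_ext (pbij_comp hf hf') ff') Mact_id.
Qed.

End FBmoduleTransport.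

Section SymmetricOperation.
Variables (k : comPzRingType) (M : FBmodule k) (p : symop M).

Lemma phi_shift_nat (S0 S : finType) n (E0 A0 B0 : {set S0}) (E A B : {set S})
    (h : S0 + 'I_n -> option S) :
  A0 \subset E0 -> B0 \subset E0 -> pbij (lift_set n E0) E h ->
  pimage h (lift_set n A0) = A -> pimage h (lift_set n B0) = B ->
  forall w, Mact M (E0 :\: A0) (E :\: A) (h \o inl) (phi_shift p n E0 A0 B0 w)
    = phi p E A B (Mact M (E0 :\: B0) (E :\: B) (h \o inl) w).
Proof.
move=> sA0 sB0 hh <- <- w.
have hA := pbij_setD hh (lift_setS n sA0); have hB := pbij_setD hh (lift_setS n sB0).
have inl_lift Z : pbij (E0 :\: Z) (lift_set n E0 :\: lift_set n Z) (fun s => Some (inl s)).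
  by rewrite lift_setD; apply: pbij_inl_set.
have inlA : pbij (lift_set n E0 :\: lift_set n A0) (E0 :\: A0) (@inl_part S0 n).
  by rewrite lift_setD; apply: pbij_inl_part.
have hA0 : pbij (E0 :\: A0) (E :\: pimage h (lift_set n A0)) (h \o inl).
  exact: pbij_comp (inl_lift A0) hA.
rewrite [in RHS](Mact_comp (inl_lift B0) hB) phi_nat ?lift_setS //.
rewrite /phi_shift -Mact_comp //; apply: (Mact_ext (pbij_comp inlA hA0)).
by case=> [s|i]; rewrite !inE.
Qed.

Lemma phi_shift_transport (S0 S : finType) (E0 A0 B0 : {set S0}) (F I E A B : {set S}) g :
  A0 \subset E0 -> B0 \subset E0 -> pbij E0 F g -> F :&: I = set0 ->
  F :|: I = E -> pimage g A0 :|: I = A -> pimage g B0 :|: I = B ->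
  forall w, Mact M (E0 :\: A0) (E :\: A) g (phi_shift p #|I| E0 A0 B0 w)
    = phi p E A B (Mact M (E0 :\: B0) (E :\: B) g w).
Proof.
move=> sA0 sB0 hg FI0 <- eA eB.
by apply: (phi_shift_nat sA0 sB0 (pbij_extend_enum hg FI0)); rewrite pimage_extend_enum.
Qed.

Definition binomial_shift (m q : nat) (S : finType) (E A B : {set S})
  (w : Mobj M (E :\: B)) : Mobj M (E :\: A) :=
  \sum_(i < q.+1) phi_shift p (m - i) E A B w *+ 'C(q, i).
Arguments binomial_shift m q {S} E A B w.

(* [B3_term E A B C D V X v] is the X-th summand on the left of (B3); those on
   the right are [B3_term E B A D C V X v]. *)
Definition B3_term (S : finType) (E A B C D : {set S}) (U V X : {set S}) (v : Mobj M U)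
  : Mobj M V :=
  relab M (E :\: X :\: ((D :\: X) :|: C)) V
    (phi p (E :\: X) ((D :\: X) :|: C) (A :|: (B :\: X))
       (relab M U (E :\: X :\: (A :|: (B :\: X))) v)).
Arguments B3_term {S} E A B C D {U} V X v.

Definition B3_reduction (S0 S : finType) (E A B C D : {set S}) (E0 A0 B0 : {set S0})
  (g : S0 -> option S) : Prop :=
  [/\ A0 \subset E0, B0 \subset E0,
      pbij E0 (E :\: (A :|: B) :&: (C :|: D)) g,
      pimage g A0 = (C :|: D) :\: (A :|: B) & pimage g B0 = (A :|: B) :\: (C :|: D)].

Section B3Reduction.
Variables (S0 S : finType) (E A B C D U V : {set S}) (E0 A0 B0 : {set S0}).
Variable g : S0 -> option S.
Hypotheses (sAE : A \subset E) (sBE : B \subset E).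
Hypotheses (AB0 : A :&: B = set0) (CD0 : C :&: D = set0).
Hypotheses (UE : U = E :\: (A :|: B)) (VE : V = E :\: (C :|: D)).
Hypothesis red : B3_reduction E A B C D E0 A0 B0 g.
Local Notation J := ((A :|: B) :&: (C :|: D)).

Lemma B3_term_shift (X : {set S}) : X \subset B :&: D -> forall w,
  B3_term E A B C D V X (Mact M (E0 :\: B0) U g w)
  = Mact M (E0 :\: A0) V g (phi_shift p (#|J| - #|X|) E0 A0 B0 w).
Proof.
move=> sXBD w; case: red => sA0 sB0 hg gA0 gB0.
have mem x : [&& (x \in A) ==> (x \in E), (x \in B) ==> (x \in E),
    ~~ ((x \in A) && (x \in B)), ~~ ((x \in C) && (x \in D)) & (x \in X) ==> (x \in B :&: D)].
  by rewrite !(implyb_subset x sAE, implyb_subset x sBE, implyb_subset x sXBD,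
               nandb_setI0 x AB0, nandb_setI0 x CD0).
have hgB : pbij (E0 :\: B0) U g.
  rewrite UE; move: (pbij_setD hg sB0); rewrite gB0; congr pbij.
  by apply/setP => x; mem_cases mem x.
have hgA : pbij (E0 :\: A0) V g.
  rewrite VE; move: (pbij_setD hg sA0); rewrite gA0; congr pbij.
  by apply/setP => x; mem_cases mem x.
rewrite /B3_term relab_Mact; last by rewrite UE; apply/setP => x; mem_cases mem x.
rewrite -(phi_shift_transport (I := J :\: X) sA0 sB0 hg); first last.
- by rewrite gB0; apply/setP => x; mem_cases mem x.
- by rewrite gA0; apply/setP => x; mem_cases mem x.
- by apply/setP => x; mem_cases mem x.
- by apply/setP => x; mem_cases mem x.
rewrite relab_Mact; last by rewrite VE; apply/setP => x; mem_cases mem x.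
have sXJ : X \subset J by apply/subsetP => x; mem_cases mem x.
by rewrite cardsD (setIidPr sXJ).
Qed.

Lemma sum_B3_term (w : Mobj M (E0 :\: B0)) :
  \sum_(X : {set S} | X \subset B :&: D) B3_term E A B C D V X (Mact M (E0 :\: B0) U g w)
  = Mact M (E0 :\: A0) V g (binomial_shift #|J| #|B :&: D| E0 A0 B0 w).
Proof.
rewrite /binomial_shift linear_sum; under [RHS]eq_bigr do rewrite linearMn.
rewrite -(sum_subsets _ (fun i => Mact M _ V g (phi_shift p (#|J| - i) E0 A0 B0 w))).
by apply: eq_bigr => X sX; apply: (B3_term_shift sX w).
Qed.

End B3Reduction.

Lemma B3_sides_shift (S0 S : finType) (E A B C D : {set S}) (E0 A0 B0 : {set S0}) g :
  A \subset E -> B \subset E -> A :&: B = set0 -> C :&: D = set0 ->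
  B3_reduction E A B C D E0 A0 B0 g ->
  forall w, let v := Mact M (E0 :\: B0) (E :\: (A :|: B)) g w in
  let J := (A :|: B) :&: (C :|: D) in
  \sum_(X : {set S} | X \subset B :&: D) B3_term E A B C D (E :\: (C :|: D)) X v
    = Mact M (E0 :\: A0) (E :\: (C :|: D)) g (binomial_shift #|J| #|B :&: D| E0 A0 B0 w)
  /\ \sum_(X : {set S} | X \subset A :&: C) B3_term E B A D C (E :\: (C :|: D)) X v
    = Mact M (E0 :\: A0) (E :\: (C :|: D)) g (binomial_shift #|J| #|A :&: C| E0 A0 B0 w).
Proof.
move=> sAE sBE AB0 CD0 red w v J; split; first exact: sum_B3_term.
have red' : B3_reduction E B A D C E0 A0 B0 g.
  by rewrite /B3_reduction [B :|: A]setUC [D :|: C]setUC.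
have -> : #|J| = #|(B :|: A) :&: (D :|: C)| by rewrite setUC [D :|: C]setUC.
by apply: sum_B3_term; rewrite // (setIC, setUC).
Qed.

Lemma binomial_shift_eq0 m q (S : finType) (E A B : {set S}) :
  condB3' p -> (0 < q)%N -> (q < m)%N ->
  A \subset E -> B \subset E -> A :&: B = set0 ->
  forall w, binomial_shift m q E A B w = 0.
Proof.
move=> B3' q_gt0 lt_qm sAE sBE AB0 w.
have termE (i : 'I_q.+1) : phi_shift p (m - i) E A B w *+ 'C(q, i)
    = ((-1) ^+ m.+1 * ((-1) ^+ i *+ 'C(q, i))) *: phi_shift p 1 E A B w.
  have lt_im : (i < m)%N by apply: leq_ltn_trans lt_qm; rewrite -ltnS.
  have sign : (-1) ^+ (m - i).+1 = (-1) ^+ m.+1 * (-1) ^+ i :> k.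
    by rewrite -{2}(subnK (ltnW lt_im)) -addSn exprD -mulrA -expr2 sqrr_sign mulr1.
  by rewrite B3' ?subn_gt0 // sign scalerMnl mulrnAr.
rewrite /binomial_shift (eq_bigr _ (fun i _ => termE i)) -scaler_suml -mulr_sumr.
by rewrite sum_sign_binomial // mulr0 scale0r.
Qed.

Lemma condB3'_condB3 : condB3' p -> condB3 p.
Proof.
move=> B3' S E A B C D sAE sBE sCE sDE AB0 CD0 AC0 BD0 v.
set J := (A :|: B) :&: (C :|: D).
set E0 := E :\: J; set A0 := (C :|: D) :\: (A :|: B); set B0 := (A :|: B) :\: (C :|: D).
have mem x : [&& (x \in A) ==> (x \in E), (x \in B) ==> (x \in E),
    (x \in C) ==> (x \in E), (x \in D) ==> (x \in E),
    ~~ ((x \in A) && (x \in B)) & ~~ ((x \in C) && (x \in D))].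
  by rewrite !(implyb_subset x sAE, implyb_subset x sBE, implyb_subset x sCE,
               implyb_subset x sDE, nandb_setI0 x AB0, nandb_setI0 x CD0).
have sA0 : A0 \subset E0 by apply/subsetP => x; rewrite /A0 /E0 /J; mem_cases mem x.
have sB0 : B0 \subset E0 by apply/subsetP => x; rewrite /B0 /E0 /J; mem_cases mem x.
have A0B0 : A0 :&: B0 = set0 by apply/setP => x; rewrite /A0 /B0; mem_cases mem x.
have red : B3_reduction E A B C D E0 A0 B0 (@Some S).
  by rewrite /B3_reduction !pimage_id; split=> //; apply: pbij_id.
have eU : E :\: (A :|: B) = E0 :\: B0.
  by apply/setP => x; rewrite /B0 /E0 /J; mem_cases mem x.
pose w := relab M (E :\: (A :|: B)) (E0 :\: B0) v.
have -> : v = Mact M (E0 :\: B0) (E :\: (A :|: B)) (@Some S) w by exact/esym/relabK.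
have [-> ->] := B3_sides_shift sAE sBE AB0 CD0 red w.
have sBDJ : B :&: D \subset J by apply/subsetP => x; rewrite /J; mem_cases mem x.
have sACJ : A :&: C \subset J by apply/subsetP => x; rewrite /J; mem_cases mem x.
have BDAC : B :&: D :&: (A :&: C) = set0 by apply/setP => x; mem_cases mem x.
rewrite !binomial_shift_eq0 ?linear0 ?card_gt0 //.
- by apply: ltn_card_setI0 sACJ sBDJ _ BD0; rewrite setIC.
- exact: ltn_card_setI0 sBDJ sACJ BDAC AC0.
Qed.

Section ShiftInstance.
Variables (S : finType) (N : nat) (E A B : {set S}) (P Q : {set 'I_N}).
Hypotheses (sAE : A \subset E) (sBE : B \subset E) (AB0 : A :&: B = set0).
Hypotheses (PQ0 : P :&: Q = set0) (P0 : P != set0) (Q0 : Q != set0).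

(* With [N] = P ⊔ Q ⊔ R this instance has Ah ∩ Ch = P, Bh ∩ Dh = Q,
   Ah ∩ Dh = R and Bh ∩ Ch = ∅, so its J is [N]. *)
Local Notation R := (~: (P :|: Q)).
Local Notation Eh := (lift_set N E).
Local Notation Ah := (inl_set N B :|: inr_set S (P :|: R)).
Local Notation Bh := (inr_set S Q).
Local Notation Ch := (inl_set N A :|: inr_set S P).
Local Notation Dh := (inr_set S (Q :|: R)).

Lemma condB3_binomial_shift : condB3 p ->
  forall w, binomial_shift N #|Q| E A B w = binomial_shift N #|P| E A B w.
Proof.
move=> B3 w.
have memS s : [&& (s \in A) ==> (s \in E), (s \in B) ==> (s \in E) & ~~ ((s \in A) && (s \in B))].
  by rewrite !(implyb_subset s sAE, implyb_subset s sBE, nandb_setI0 s AB0).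
have memI i : ~~ ((i \in P) && (i \in Q)) by apply: nandb_setI0.
have sAh : Ah \subset Eh by apply/subsetP => -[s|i]; [mem_cases memS s | mem_cases memI i].
have sBh : Bh \subset Eh by apply/subsetP => -[s|i]; [mem_cases memS s | mem_cases memI i].
have sCh : Ch \subset Eh by apply/subsetP => -[s|i]; [mem_cases memS s | mem_cases memI i].
have sDh : Dh \subset Eh by apply/subsetP => -[s|i]; [mem_cases memS s | mem_cases memI i].
have ABh : Ah :&: Bh = set0 by apply/setP => -[s|i]; [mem_cases memS s | mem_cases memI i].
have CDh : Ch :&: Dh = set0 by apply/setP => -[s|i]; [mem_cases memS s | mem_cases memI i].
have ACh : #|Ah :&: Ch| = #|P|.
  by rewrite -(card_inr_set S); apply: eq_card => -[s|i]; [mem_cases memS s | mem_cases memI i].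
have BDh : #|Bh :&: Dh| = #|Q|.
  by rewrite -(card_inr_set S); apply: eq_card => -[s|i]; [mem_cases memS s | mem_cases memI i].
have Jh : (Ah :|: Bh) :&: (Ch :|: Dh) = inr_set S setT.
  by apply/setP => -[s|i]; [mem_cases memS s | mem_cases memI i].
have red : B3_reduction Eh Ah Bh Ch Dh E A B (fun s => Some (inl s)).
  rewrite /B3_reduction Jh !pimage_inl; split=> //.
  - have -> : Eh :\: inr_set S setT = inl_set N E by apply/setP => -[s|i]; rewrite !inE.
    exact: pbij_inl_set.
  - by apply/setP => -[s|i]; [mem_cases memS s | mem_cases memI i].
  - by apply/setP => -[s|i]; [mem_cases memS s | mem_cases memI i].
have eV : Eh :\: (Ch :|: Dh) = inl_set N (E :\: A).
  by apply/setP => -[s|i]; [mem_cases memS s | mem_cases memI i].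
have inlV : pbij (E :\: A) (Eh :\: (Ch :|: Dh)) (fun s => Some (inl s)).
  by rewrite eV; apply: pbij_inl_set.
have inl_partV : pbij (Eh :\: (Ch :|: Dh)) (E :\: A) (@inl_part S N).
  by rewrite eV; apply: pbij_inl_part.
apply: (can_inj (MactK inlV inl_partV (fun _ _ => erefl))).
have := B3_sides_shift sAh sBh ABh CDh red w.
rewrite /= Jh card_inr_set cardsT card_ord ACh BDh => -[<- <-].
by apply: B3; rewrite // -card_gt0 ?ACh ?BDh card_gt0.
Qed.
End ShiftInstance.

Lemma phi_shift_succ n (S : finType) (E A B : {set S}) :
  condB3 p -> (0 < n)%N -> A \subset E -> B \subset E -> A :&: B = set0 ->
  forall w, phi_shift p n.+1 E A B w = - phi_shift p n E A B w.
Proof.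
move=> B3 n_gt0 sAE sBE AB0 w.
have inord_neq i j : (i < n.+2)%N -> (j < n.+2)%N -> i != j -> inord i != inord j :> 'I_n.+2.
  by move=> ? ? ?; rewrite -(inj_eq val_inj) /= !inordK.
pose P : {set 'I_n.+2} := [set inord 0; inord 1]; pose Q : {set 'I_n.+2} := [set inord 2].
have cP : #|P| = 2%N by rewrite cards2 inord_neq.
have PQ0 : P :&: Q = set0.
  by rewrite setIC disjoint_setI0 // disjoints1 !inE negb_or !inord_neq.
have P0 : P != set0 by rewrite -card_gt0 cP.
have Q0 : Q != set0 by rewrite -card_gt0 cards1.
have := condB3_binomial_shift sAE sBE AB0 PQ0 P0 Q0 B3 w.
rewrite /binomial_shift cP cards1 !big_ord_recr !big_ord0 /= !subSS !subn0.
rewrite bin0 binn bin1 !mulr1n mulr2n !add0r !addrA => e.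
apply/eqP; rewrite -addr_eq0; apply/eqP.
apply: (@addrI _ (phi_shift p n.+2 E A B w + phi_shift p n.+1 E A B w)).
by rewrite addr0 [RHS]e !addrA.
Qed.

End SymmetricOperation.

Theorem proposition7p5 (k : comPzRingType) (M : FBmodule k) (p : symop M) :
  condB3 p <-> condB3' p.
Proof.
split; last exact: condB3'_condB3.
move=> B3 n n_gt0 S E A B sAE sBE AB0 w.
elim: n n_gt0 => [//|[|n] IH _]; first by rewrite expr2 mulrNN mulr1 scale1r.
by rewrite phi_shift_succ // IH // [in RHS]exprS mulN1r scaleNr.
Qed.
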